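(* Let $\boldsymbol{\Sigma}$ be an $n\times n$ positive definite covariance matrix and $\mathbf{B}=\mathrm{mrd}(\boldsymbol{\Sigma})=(\mathbf{B}^M,\dots,\mathbf{B}^0)$ its multi-resolution decomposition (defined in the context). Then $\mathbf{B}'\mathbf{B}$ is a block matrix with $M+1$ row blocks and $M+1$ column blocks. For $k,l=0,\dots,M$ with $k\ge l$, the $(M+1-k,M+1-l)$-th block is of dimension $|\mathcal{K}^k|\times|\mathcal{K}^l|$ and is itself block-diagonal with blocks that are $r_l$ columns wide.
   Context: Setting for the multi-resolution decomposition (MRD). Grid indices are $\mathcal{I}=\{1,\dots,n\}$. A domain is recursively partitioned: for $m=0,\dots,M-1$ and $(j_1,\dots,j_m)\in\{1,\dots,J\}^m$, the index set $\mathcal{I}_{j_1,\dots,j_m}$ (with $\mathcal{I}_{\emptyset}=\mathcal{I}$) is the disjoint union of $\mathcal{I}_{j_1,\dots,j_m,j_{m+1}}$, $j_{m+1}=1,\dots,J$. Indices are ordered so that each finest set $\mathcal{I}_{j_1,\dots,j_M}$ is contiguous, in lexicographic order of $(j_1,\dots,j_M)$. Knot sets $\mathcal{K}_{j_1,\dots,j_m}\subset \mathcal{I}_{j_1,\dots,j_m}\setminus\mathcal{K}^{0:m-1}$ with $|\mathcal{K}_{j_1,\dots,j_m}|=r_m$ are chosen sequentially for $m=0,\dots,M$, where $\mathcal{K}^m=\bigcup_{(j_1,\dots,j_m)}\mathcal{K}_{j_1,\dots,j_m}$ and $\mathcal{K}^{0:m}=\bigcup_{l\le m}\mathcal{K}^l$,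 such that all knot sets partition $\{1,\dots,n\}$. With $\boldsymbol{\Sigma}[\mathcal{J}_1,\mathcal{J}_2]$ denoting submatrices, for $m=0,\dots,M$, each $(j_1,\dots,j_m)$, and $\ell=0,\dots,m$ define recursively $\mathbf{W}^\ell_{j_1,\dots,j_m}=\boldsymbol{\Sigma}[\mathcal{I}_{j_1,\dots,j_m},\mathcal{K}_{j_1,\dots,j_\ell}]-\sum_{k=0}^{\ell-1}\mathbf{W}^k_{j_1,\dots,j_m}(\mathbf{V}^k_{j_1,\dots,j_k})^{-1}(\mathbf{V}^k_{j_1,\dots,j_\ell})'$, $\mathbf{V}^\ell_{j_1,\dots,j_m}=\boldsymbol{\Sigma}[\mathcal{K}_{j_1,\dots,j_m},\mathcal{K}_{j_1,\dots,j_\ell}]-\sum_{k=0}^{\ell-1}\mathbf{V}^k_{j_1,\dots,j_m}(\mathbf{V}^k_{j_1,\dots,j_k})^{-1}(\mathbf{V}^k_{j_1,\dots,j_\ell})'$, and $\mathbf{B}_{j_1,\dots,j_m}=\mathbf{W}^m_{j_1,\dots,j_m}(\mathbf{V}^m_{j_1,\dots,j_m})^{-1/2}$ ($|\mathcal{I}_{j_1,\dots,j_m}|\times r_m$). Let $\mathbf{B}^m=\mathrm{blockdiag}(\{\mathbf{B}_{j_1,\dots,j_m}\})$ in lexicographic order (an $n\times|\mathcal{K}^m|$ matrix), and $\mathrm{mrd}(\boldsymbol{\Sigma})=\mathbf{B}=(\mathbf{B}^M,\mathbf{B}^{M-1},\dots,\mathbf{B}^0)$. *)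

From HB Require Import structures.
From mathcomp Require Import all_boot all_order all_algebra.
From Stdlib Require Import ClassicalEpsilon.
Set Implicit Arguments. Unset Strict Implicit. Unset Printing Implicit Defensive.
Import Order.TTheory GRing.Theory Num.Theory.
Local Open Scope ring_scope.

Section MRD.
Variable R : realFieldType.

Definition posdef (p : nat) (A : 'M[R]_p) : Prop :=
  A^T = A /\ forall x : 'rV[R]_p, x != 0 -> 0 < (x *m A *m x^T) ord0 ord0.

Definition invsqrtmx (p : nat) (V : 'M[R]_p) : 'M[R]_p :=
  epsilon (inhabits 0) (fun S : 'M[R]_p => posdef S /\ S *m S = invmx V).

Definition mxcol_nat (p q : nat) (A : 'M[R]_(p, q)) (i : 'I_p) (c : nat) : R :=
  if insub c is Some c' then A i c' else 0.

Variables (n J M : nat).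
(* path i = (j_1,...,j_M): address of the finest set I_{j_1..j_M} containing i *)
Variable path : 'I_n -> seq 'I_J.
(* lev i = m  iff  i is a knot of level m, i.e. i \in K^m *)
Variable lev : 'I_n -> nat.
Variable r : nat -> nat.

Definition Iset (a : seq 'I_J) : {set 'I_n} :=
  [set i | take (size a) (path i) == a].
Definition Kset (a : seq 'I_J) : {set 'I_n} :=
  [set i | (lev i == size a) && (take (size a) (path i) == a)].
Definition Klevel (m : nat) : {set 'I_n} := [set i | lev i == m].
Definition knots (a : seq 'I_J) : seq 'I_n := enum (Kset a).

(* lexicographic code of an address: number of (j_1..j_m) in lexicographic order *)
Definition code (a : seq 'I_J) : nat := foldl (fun acc (d : 'I_J) => acc * J + d)%N 0%N a.

Variable Sigma : 'M[R]_n.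

(* Sigma[ all rows , K_b ]  (columns ordered by increasing index) *)
Definition SigK (l : nat) (b : seq 'I_J) : 'M[R]_(n, r l) :=
  \matrix_(i, s) (if onth (knots b) s is Some t then Sigma i t else 0).

(* rows K_a of a matrix with all n rows; here m = |a| *)
Definition rowsK (m : nat) (a : seq 'I_J) (p : nat) (A : 'M[R]_(n, p)) : 'M[R]_(r m, p) :=
  \matrix_(t, s) (if onth (knots a) t is Some t' then A t' s else 0).

(* One step of the recursion.  prev k c stands for W^k_{c} computed on ALL n rows
   (c of length k); the rows of W^l_{j_1..j_m} in I_{j_1..j_m} are the rows of
   the all-rows version, which only depends on (j_1..j_l).  For b = (j_1..j_l):
   W^l = Sigma[., K_b] - sum_{k<l} W^k (V^k_{j1..jk})^{-1} (V^k_{j1..jl})'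
   with V^k_{a} = rows K_a of W^k_a. *)
Definition Wstep (prev : forall k : nat, seq 'I_J -> 'M[R]_(n, r k))
  (l : nat) (b : seq 'I_J) : 'M[R]_(n, r l) :=
  SigK l b - \sum_(k < l)
     (prev k (take k b) *m invmx (rowsK k (take k b) (prev k (take k b)))
        *m (rowsK l b (prev k (take k b)))^T).

Fixpoint Wrec (d : nat) : forall k : nat, seq 'I_J -> 'M[R]_(n, r k) :=
  match d with
  | 0 => fun k b => Wstep (fun k _ => 0) k b
  | d'.+1 => fun k b => Wstep (Wrec d') k b
  end.

Definition Wall (l : nat) (b : seq 'I_J) : 'M[R]_(n, r l) := Wrec l l b.
Definition Vmx (a : seq 'I_J) : 'M[R]_(r (size a)) := rowsK (size a) a (Wall (size a) a).
(* B_{a} = W^m_a (V^m_a)^{-1/2}, on all rows (to be restricted to rows in I_a) *)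
Definition Bcell (a : seq 'I_J) : 'M[R]_(n, r (size a)) :=
  Wall (size a) a *m invsqrtmx (Vmx a).

(* B^m = blockdiag(B_{j_1..j_m}) in lexicographic order: n x (J^m r_m) *)
Definition Bmat (m : nat) : 'M[R]_(n, J ^ m * r m) :=
  \matrix_(i, c)
    (let a := take m (path i) in
     if code a == (c %/ r m)%N then mxcol_nat (Bcell a) i (c %% r m)%N else 0).

Definition Ncols : nat := (\sum_(m < M.+1) J ^ m * r m)%N.
Definition offset (k : nat) : nat := (\sum_(m < M.+1 | k < m) J ^ m * r m)%N.

(* mrd(Sigma) = B = (B^M, B^{M-1}, ..., B^0) *)
Definition mrd : 'M[R]_(n, Ncols) :=
  \matrix_(i, c) \sum_(m < M.+1)
     (if (offset m <= c < offset m + J ^ m * r m)%N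
      then mxcol_nat (Bmat m) i (c - offset m)%N else 0).

End MRD.

(* Row i of B^k vanishes outside the column block numbered by the code of its
   level-k address take k (path i), and the level-l address of i is a prefix of
   its level-k address, so its code is the level-k code divided by J^(k-l).
   Hence in (B^k)'B^l = sum_i (row i of B^k)' (row i of B^l) every summand
   lives in a diagonal block.  The size of K^k is a count of the r_k knots of
   each of the J^k address cells of length k. *)
From HB Require Import structures.
From mathcomp Require Import all_boot all_order all_algebra.
From mathcomp Require Import zify.
Import Order.TTheory GRing.Theory Num.Theory.
Local Open Scope ring_scope.

Section Code.
Variable J : nat.

Lemma foldl_code (z : nat) (b : seq 'I_J) :
  foldl (fun acc (d : 'I_J) => acc * J + d)%N z b = (z * J ^ size b + code b)%N.
Proof.
elim: b z => [|d b IH] z /=; first by rewrite expn0 muln1 addn0.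
by rewrite /code /= IH [in RHS]IH expnS; nia.
Qed.

Lemma code_cat (a b : seq 'I_J) : code (a ++ b) = (code a * J ^ size b + code b)%N.
Proof. by rewrite /code foldl_cat foldl_code. Qed.

Lemma code_lt (b : seq 'I_J) : (code b < J ^ size b)%N.
Proof.
elim: b => [|d b IH] //=.
rewrite /code /= foldl_code /= expnS.
by have := ltn_ord d; nia.
Qed.

Lemma code_take_divn (s : seq 'I_J) (k l : nat) :
  (l <= k <= size s)%N -> (code (take k s) %/ J ^ (k - l))%N = code (take l s).
Proof.
case/andP=> lk ks.
have -> : take k s = take l s ++ drop l (take k s).
  by rewrite -{1}(cat_take_drop l (take k s)) take_takel.
have size_suffix : size (drop l (take k s)) = (k - l)%N.
  by rewrite size_drop size_takel.
have := code_lt (drop l (take k s)); rewrite code_cat size_suffix => suffix_lt.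
by rewrite divnMDl ?divn_small ?addn0 //; lia.
Qed.

End Code.

Section MRDBlocks.
Variables (R : realFieldType) (n J M : nat).
Variables (path : 'I_n -> seq 'I_J) (lev : 'I_n -> nat) (r : nat -> nat).
Variable Sigma : 'M[R]_n.

Lemma offset_block_le (m k : nat) :
  (m < k <= M)%N -> (offset J M r k + J ^ k * r k <= offset J M r m)%N.
Proof.
case/andP=> mk kM.
have -> : (offset J M r k + J ^ k * r k =
           \sum_(m' < M.+1 | (k <= m')%N) J ^ m' * r m')%N.
  rewrite [RHS](bigD1 (inord k)) /= inordK // addnC /offset; congr (_ + _)%N.
  by apply: eq_bigl => m'; rewrite -val_eqE /= inordK // ltn_neqAle eq_sym andbC.
rewrite /offset [X in (_ <= X)%N]big_mkcond [X in (X <= _)%N]big_mkcond /=.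
apply: leq_sum => m' _; case: ifP => // km'.
by rewrite ifT //; apply: leq_trans km'.
Qed.

Lemma mrd_block_entry {k p : nat} {x : 'I_(Ncols J M r)} (i : 'I_n) :
  (k <= M)%N -> (p < J ^ k * r k)%N -> val x = (offset J M r k + p)%N ->
  mrd M path lev r Sigma i x = mxcol_nat (Bmat path lev r Sigma k) i p.
Proof.
move=> kM pk xE.
rewrite mxE (bigD1 (inord k)) //= inordK ?ltnS // xE ifT; last by lia.
rewrite big1 ?addr0; first by congr mxcol_nat; lia.
move=> m mk; case: ifP => // /andP[lo hi]; exfalso.
have mM : (m <= M)%N by rewrite -ltnS.
case: (ltngtP m k) => [mltk|kltm|mE].
- by have := @offset_block_le m k; rewrite mltk kM; lia.
- by have := @offset_block_le k m; rewrite kltm mM; lia.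
- by move: mk; rewrite -val_eqE /= inordK ?ltnS // mE eqxx.
Qed.

Lemma Bmat_support (k p : nat) (i : 'I_n) :
  mxcol_nat (Bmat path lev r Sigma k) i p != 0 ->
  code (take k (path i)) = (p %/ r k)%N.
Proof.
rewrite /mxcol_nat; case: insubP => [c _ cE|]; last by rewrite eqxx.
rewrite -cE => nonzero; apply/eqP; apply: contraNT nonzero => code_neq.
by rewrite mxE /= (negbTE code_neq).
Qed.

Hypothesis size_path : forall i, size (path i) = M.

Lemma card_Klevel (k : nat) :
  (forall a : seq 'I_J, size a = k -> #|Kset path lev a| = r k) ->
  (k <= M)%N -> #|Klevel lev k| = (J ^ k * r k)%N.
Proof.
move=> card_Kset kM.
rewrite -sum1_card.
transitivity (\sum_(i | lev i == k)
                \sum_(a : k.-tuple 'I_J | take k (path i) == val a) 1)%N.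
  apply: eq_big => [i|i _]; first by rewrite inE.
  have size_addr : size (take k (path i)) == k by rewrite size_takel ?size_path.
  rewrite (eq_bigl (fun a => a == Tuple size_addr)) ?big_pred1_eq // => a.
  by rewrite -val_eqE /= eq_sym.
rewrite (exchange_big_dep predT) //=.
transitivity (\sum_(a : k.-tuple 'I_J) r k)%N.
  apply: eq_bigr => a _; rewrite -(card_Kset a) ?size_tuple // sum1_card.
  by apply: eq_card => i; rewrite !inE size_tuple.
by rewrite sum_nat_const card_tuple card_ord.
Qed.

Lemma mrd_gram_block_diag (k l p q : nat) (x y : 'I_(Ncols J M r)) :
  (l <= k <= M)%N -> (p < J ^ k * r k)%N -> (q < J ^ l * r l)%N ->
  val x = (offset J M r k + p)%N -> val y = (offset J M r l + q)%N ->
  (p %/ (J ^ (k - l) * r k) != q %/ r l)%N ->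
  ((mrd M path lev r Sigma)^T *m mrd M path lev r Sigma) x y = 0.
Proof.
case/andP=> lk kM pk ql xE yE off_diag.
rewrite mxE big1 // => i _.
rewrite mxE (mrd_block_entry i kM pk xE) (mrd_block_entry i (leq_trans lk kM) ql yE).
have [->|/Bmat_support codek] := eqVneq (mxcol_nat (Bmat path lev r Sigma k) i p) 0.
  by rewrite mul0r.
have [->|/Bmat_support codel] := eqVneq (mxcol_nat (Bmat path lev r Sigma l) i q) 0.
  by rewrite mulr0.
move: off_diag; rewrite mulnC divnMA -codek -codel code_take_divn ?eqxx //.
by rewrite lk size_path.
Qed.

End MRDBlocks.

Theorem proposition2 (R : realFieldType) (n J M : nat)
  (path : 'I_n -> seq 'I_J) (lev : 'I_n -> nat) (r : nat -> nat)
  (Sigma : 'M[R]_n) :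
  (* Sigma is a positive definite covariance matrix *)
  posdef Sigma ->
  (* every index lies in a finest set I_{j_1..j_M} *)
  (forall i, size (path i) = M) ->
  (* finest sets are contiguous, in lexicographic order of (j_1..j_M) *)
  (forall i i' : 'I_n, (i <= i')%N -> (code (path i) <= code (path i'))%N) ->
  (* the knot sets K_{j_1..j_m}, m = 0..M, partition {1..n} *)
  (forall i, (lev i <= M)%N) ->
  (* |K_{j_1..j_m}| = r_m *)
  (forall a : seq 'I_J, (size a <= M)%N -> #|Kset path lev a| = r (size a)) ->
  let B := mrd M path lev r Sigma in
  (* the (M+1-k)-th row block / column block of B'B has size |K^k| *)
  (forall k, (k <= M)%N -> #|Klevel lev k| = (J ^ k * r k)%N) /\
  (* for k >= l, the (M+1-k, M+1-l)-th block (B^k)'B^l is block diagonal,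
     with J^l diagonal blocks of size (J^(k-l) r_k) x r_l *)
  (forall (k l p q : nat) (x y : 'I_(Ncols J M r)),
      (l <= k <= M)%N ->
      (p < J ^ k * r k)%N -> (q < J ^ l * r l)%N ->
      val x = (offset J M r k + p)%N -> val y = (offset J M r l + q)%N ->
      (p %/ (J ^ (k - l) * r k) != q %/ r l)%N ->
      (B^T *m B) x y = 0).
Proof.
move=> _ size_path _ _ card_Kset B; split.
  move=> k kM; apply: card_Klevel => // a size_a.
  by rewrite card_Kset size_a.
exact: mrd_gram_block_diag.
Qed.
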